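(* Let $c<-14$, $u\in\Omega_0^M$ with $\kappa(u)=c$, and let $v$ be a node of the binary tree $B_\Lambda(u)$. Define a sequence $v_0=v,v_1,v_2,\dots$ by $v_{i+1}=Q_x(v_i)$ if $\tau(Q_x(v_i))<\tau(v_i)$; otherwise $v_{i+1}=Q_y(v_i)$ if $\tau(Q_y(v_i))<\tau(v_i)$; otherwise $v_{i+1}=Q_z(v_i)$. Then there is $n$ (depending only on $c$ and $v$) with $v_n=u$, and $v_0,\dots,v_n$ is the unique path from $v$ to $u$ in $B_\Lambda(u)$.
   Context: $\kappa(x,y,z)=-x^2-y^2+z^2+xyz-2$; for $u=(x,y,z)$, $\bar z(u)=-xy-z$ and $\tau(u)=-z\,\bar z(u)$. $Q_x(x,y,z)=(yz-x,y,z)$, $Q_y(x,y,z)=(x,xz-y,z)$, $Q_z(x,y,z)=(x,y,-xy-z)$, $\Lambda=\langle Q_x,Q_y,Q_z\rangle$. $\Omega_0^M=\{(x,y,z): z<-2,\ xy+z>2\}$. For $u\in\Omega_0^M$ the binary tree $B_\Lambda(u)$ is defined inductively: $u$ is the root; its two descendents are $Q_x(u)$ and $Q_y(u)$; if $v\ne u$ is a node with parent $\hat v$ and $v=\lambda\hat v$ with $\lambda\in\{Q_x,Q_y,Q_z\}$, then the two descendents of $v$ are $\lambda_1v$ and $\lambda_2v$ where $\{\lambda_1,\lambda_2\}=\{Q_x,Q_y,Q_z\}\setminus\{\lambda\}$. *)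

From Stdlib Require Import Reals List Arith.
Open Scope R_scope.

Definition pt : Type := (R * R * R)%type.

Definition kappa (u : pt) : R :=
  let '(x, y, z) := u in - x^2 - y^2 + z^2 + x*y*z - 2.

Definition zbar (u : pt) : R := let '(x, y, z) := u in - x*y - z.

Definition tau (u : pt) : R := let '(_, _, z) := u in - z * zbar u.

Definition Qx (u : pt) : pt := let '(x, y, z) := u in (y*z - x, y, z).
Definition Qy (u : pt) : pt := let '(x, y, z) := u in (x, x*z - y, z).
Definition Qz (u : pt) : pt := let '(x, y, z) := u in (x, y, - x*y - z).

Definition Omega0M (u : pt) : Prop :=
  let '(x, y, z) := u in z < -2 /\ x*y + z > 2.

Inductive move := MX | MY | MZ.

Definition apply_move (m : move) (p : pt) : pt :=
  match m with MX => Qx p | MY => Qy p | MZ => Qz p end.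

(* A node of the binary tree B_Lambda(u) is encoded by the word of moves
   leading to it from the root, listed in order of application
   (first element = first move applied to u). *)
Fixpoint no_repeat (m : move) (w : list move) : Prop :=
  match w with
  | nil => True
  | m' :: w' => m' <> m /\ no_repeat m' w'
  end.

Definition tree_word (w : list move) : Prop :=
  match w with
  | nil => True
  | m :: w' => (m = MX \/ m = MY) /\ no_repeat m w'
  end.

Definition node_val (u : pt) (w : list move) : pt :=
  fold_left (fun p m => apply_move m p) w u.

Definition descent_step (p : pt) : pt :=
  if Rlt_dec (tau (Qx p)) (tau p) then Qx p
  else if Rlt_dec (tau (Qy p)) (tau p) then Qy p
  else Qz p.

Fixpoint descent (v : pt) (i : nat) : pt :=
  match i with
  | O => v
  | S i' => descent_step (descent v i')
  end.

(** The height [tau (x, y, z) = z (x y + z)] is preserved by [Qz], and [Qx],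
    [Qy] change it by [(y z)^2 - 2 x y z] and [(x z)^2 - 2 x y z].  Writing
    [P = x y z], one has [(y z)^2 < 2 P] iff [0 < P < 2 x^2], so the sign
    conditions of the sector [0 < P < 2 x^2, 2 y^2 < P, 4 < z^2] force the
    greedy step to be [Qx]; symmetrically for [Qy], while on [P < 0, 4 < z^2]
    the greedy step is [Qz].  The root lies in the last sector, and applying a
    generator different from the one labelling the current sector moves the
    point into that generator's sector.  Hence every node of the tree lies in
    the sector of the last generator used to reach it, the greedy step undoes
    that generator, and the descent retraces the path back to the root. *)

From Stdlib Require Import Reals List Lra Lia Psatz.
Open Scope R_scope.

Lemma tau_Qx x y z : tau (Qx (x, y, z)) = tau (x, y, z) + (y*z)^2 - 2*(x*y*z).
Proof. simpl; ring. Qed.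

Lemma tau_Qy x y z : tau (Qy (x, y, z)) = tau (x, y, z) + (x*z)^2 - 2*(x*y*z).
Proof. simpl; ring. Qed.

Lemma apply_move_involutive m p : apply_move m (apply_move m p) = p.
Proof. destruct p as [[x y] z]; destruct m; simpl; repeat f_equal; ring. Qed.

(** [sector a b z] with [a] the coordinate last replaced. *)
Definition sector (a b z : R) : Prop :=
  0 < a*b*z /\ a*b*z < 2*a^2 /\ 2*b^2 < a*b*z /\ 4 < z^2.

Definition region (m : move) (p : pt) : Prop :=
  let '(x, y, z) := p in
  match m with
  | MX => sector x y z
  | MY => sector y x z
  | MZ => x*y*z < 0 /\ 4 < z^2
  end.

Lemma sq_lt_twice_prod a b z :
  0 < a*b*z -> a*b*z < 2*a^2 -> (b*z)^2 < 2*(a*b*z).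
Proof.
  intros Hpos Hlt.
  assert (HP : (a*b*z)^2 = a^2 * (b*z)^2) by ring.
  nra.
Qed.

Lemma sq_gt_twice_prod a b z :
  0 < a*b*z -> 2*a^2 < a*b*z -> 2*(a*b*z) < (b*z)^2.
Proof.
  intros Hpos Hgt.
  assert (HP : (a*b*z)^2 = a^2 * (b*z)^2) by ring.
  nra.
Qed.

Lemma descent_step_region m p : region m p -> descent_step p = apply_move m p.
Proof.
  destruct p as [[x y] z]; unfold descent_step.
  rewrite tau_Qx, tau_Qy.
  destruct m; simpl; intros H.
  - destruct H as (Hpos & Hlt & _).
    assert (Hx := sq_lt_twice_prod x y z Hpos Hlt).
    destruct (Rlt_dec _ _); [reflexivity | lra].
  - destruct H as (Hpos & Hlt & Hgt & _).
    assert (Hx : 2*(x*y*z) < (y*z)^2) by (apply sq_gt_twice_prod; lra).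
    assert (Hy : (x*z)^2 < 2*(x*y*z)).
    { replace (x*y*z) with (y*x*z) by ring. apply sq_lt_twice_prod; lra. }
    destruct (Rlt_dec _ _); [lra|].
    destruct (Rlt_dec _ _); [reflexivity | lra].
  - destruct H as [Hneg _].
    destruct (Rlt_dec _ _); [nra|].
    destruct (Rlt_dec _ _); [nra | reflexivity].
Qed.

Lemma sector_flip a b z : sector a b z -> sector (a*z - b) a z.
Proof.
  intros (Hpos & Hlt & Hgt & Hz).
  set (P := a*b*z) in *; set (T := a^2*z^2).
  assert (HPT : P^2 = b^2 * T) by (unfold P, T; ring).
  assert (HT2P : 2*P < T) by nra.
  assert (HTa : 4*a^2 < T) by (unfold T; nra).
  assert (HP' : (a*z - b)*a*z = T - P) by (unfold P, T; ring).
  assert (Hb' : (a*z - b)^2 = T - 2*P + b^2) by (unfold P, T; ring).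
  assert (Hfac : T*(T - 3*P + 2*b^2) = (T - P)*(T - 2*P)) by nra.
  unfold sector; rewrite HP', Hb'.
  repeat split; [lra | nra | lra | exact Hz].
Qed.

Lemma region_Qz_of_pos x y z :
  0 < x*y*z -> 4 < z^2 -> region MZ (Qz (x, y, z)).
Proof.
  intros Hpos Hz; simpl.
  replace (x*y*(-x*y - z)) with (-(x*y)^2 - x*y*z) by ring.
  replace ((-x*y - z)^2) with ((x*y)^2 + 2*(x*y*z) + z^2) by ring.
  split; nra.
Qed.

Lemma sector_of_neg a b z : a*b*z < 0 -> 4 < z^2 -> sector (b*z - a) b z.
Proof.
  intros Hneg Hz; unfold sector.
  replace ((b*z - a)*b*z) with ((b*z)^2 - a*b*z) by ring.
  replace ((b*z - a)^2) with ((b*z)^2 - 2*(a*b*z) + a^2) by ring.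
  repeat split; nra.
Qed.

Lemma region_move m m' p : region m p -> m' <> m -> region m' (apply_move m' p).
Proof.
  destruct p as [[x y] z].
  destruct m, m'; intros H Hne; try congruence; simpl in H |- *.
  - exact (sector_flip x y z H).
  - destruct H as (Hpos & _ & _ & Hz); exact (region_Qz_of_pos x y z Hpos Hz).
  - exact (sector_flip y x z H).
  - destruct H as (Hpos & _ & _ & Hz); apply region_Qz_of_pos; lra.
  - destruct H as [Hneg Hz]; exact (sector_of_neg x y z Hneg Hz).
  - destruct H as [Hneg Hz]; apply sector_of_neg; lra.
Qed.

Lemma region_root u : Omega0M u -> region MZ u.
Proof. destruct u as [[x y] z]; intros [Hz Hxy]; simpl; split; nra. Qed.

Lemma tree_word_no_repeat w : tree_word w -> no_repeat MZ w.
Proof.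
  destruct w as [|m w]; simpl; [trivial|].
  intros [[-> | ->] Hw]; split; easy.
Qed.

Lemma no_repeat_firstn k : forall m w, no_repeat m w -> no_repeat m (firstn k w).
Proof.
  induction k as [|k IH]; intros m [|a w]; simpl; try easy.
  intros [Hne Hw]; split; auto.
Qed.

Lemma tree_word_firstn k w : tree_word w -> tree_word (firstn k w).
Proof.
  destruct k, w as [|m w]; simpl; try easy.
  intros [Hm Hw]; split; auto using no_repeat_firstn.
Qed.

Lemma region_last_move m : forall w m0 p,
  no_repeat m0 (w ++ m :: nil) -> region m0 p -> region m (node_val p (w ++ m :: nil)).
Proof.
  induction w as [|a w IH]; intros m0 p [Hne Hw] Hp; simpl.
  - exact (region_move m0 m p Hp Hne).
  - apply (IH a); [exact Hw | exact (region_move m0 a p Hp Hne)].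
Qed.

Lemma descent_step_parent u w : Omega0M u -> tree_word w -> w <> nil ->
  descent_step (node_val u w) = node_val u (removelast w).
Proof.
  intros Hu Hw Hne.
  rewrite (app_removelast_last MX Hne) in Hw |- *.
  rewrite removelast_last.
  set (m := last w MX) in *.
  rewrite (descent_step_region m).
  - unfold node_val; rewrite fold_left_app; apply apply_move_involutive.
  - eapply region_last_move; [apply tree_word_no_repeat, Hw | apply region_root, Hu].
Qed.

Lemma descent_node_val u w i : Omega0M u -> tree_word w -> (i <= length w)%nat ->
  descent (node_val u w) i = node_val u (firstn (length w - i) w).
Proof.
  intros Hu Hw; induction i as [|i IH]; intros Hi; simpl.
  - now rewrite Nat.sub_0_r, firstn_all.
  - rewrite IH by lia.
    replace (length w - i)%nat with (S (length w - S i)) by lia.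
    rewrite descent_step_parent; auto using tree_word_firstn.
    + rewrite removelast_firstn by lia; reflexivity.
    + intros E; apply (f_equal (@length move)) in E.
      rewrite length_firstn, Nat.min_l in E by lia; discriminate.
Qed.

Theorem mainTheorem10 :
  forall (c : R) (u : pt) (w : list move),
    c < -14 ->
    Omega0M u ->
    kappa u = c ->
    tree_word w ->
    exists n : nat,
      descent (node_val u w) n = u /\
      n = length w /\
      (forall i : nat, (i <= n)%nat ->
         descent (node_val u w) i = node_val u (firstn (n - i) w)).
Proof.
  intros c u w _ Hu _ Hw.
  exists (length w); repeat split.
  - rewrite descent_node_val, Nat.sub_diag by auto; reflexivity.
  - intros i Hi; apply descent_node_val; auto.
Qed.
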